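(* Let $N\ge 1$, let $\mathcal{A}$ be a collection of subsets of $\{1,\dots,N\}$ with $\emptyset\in\mathcal{A}$, which is downward closed (if $A\in\mathcal{A}$ and $B\subseteq A$ then $B\in\mathcal{A}$) and such that every buyer $n$ belongs to some $A\in\mathcal{A}$. Then for every $r>1$, the worst case efficiency loss ratio for binary valued buyers satisfies $$\eta(r,2;\mathcal{A})\le \frac{r-1}{2r-1}\le \frac12 .$$
   Context: Model: buyers $n\in\{1,\dots,N\}$; $\mathcal{A}$ is the collection of feasible sets of winners. Buyer $n$'s type $X_n$ is a discrete random variable taking values $0<x_n^1<\dots<x_n^{K_n}$ with probabilities $p_n^i=\Pr[X_n=x_n^i]>0$; $X_1,\dots,X_N$ are independent. An allocation rule $\pi$ maps each bid vector $v=(v_1,\dots,v_N)$, $v_n\in\{x_n^1,\dots,x_n^{K_n}\}$, to a probability distribution $(\pi_A(v))_{A\in\mathcal{A}}$ on $\mathcal{A}$; set $Q_n(v)=\sum_{A\in\mathcal{A}:n\in A}\pi_A(v)$. Virtual valuation: $w_n(x_n^i)=x_n^i-(x_n^{i+1}-x_n^i)\frac{\sum_{j=i+1}^{K_n}p_n^j}{p_n^i}$ for $i<K_n$, and $w_n(x_n^{K_n})=x_n^{K_n}$. Monotone virtual valuation $\overline{w}_n$: let $(g_n^0,h_n^0)=(0,-x_n^1)$, $(g_n^i,h_n^i)=(\sum_{j\le i}p_n^j,\,-x_n^{i+1}\sum_{j>i}p_n^j)$ for $1\le i\le K_n-1$, $(g_n^{K_n},h_n^{K_n})=(1,0)$;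 let $\overline{h}_n^i$ be the value at $g_n^i$ of the lower convex hull of these points, and $\overline{w}_n(x_n^i)=(\overline{h}_n^i-\overline{h}_n^{i-1})/(g_n^i-g_n^{i-1})$. (For binary types $\{L_n,H_n\}$ with $\Pr[X_n=H_n]=p_n$ this gives $\overline{w}_n(H_n)=H_n$, $\overline{w}_n(L_n)=(L_n-p_nH_n)/(1-p_n)$; for a single-valued type, $\overline{w}_n(x_n^1)=x_n^1$.) An allocation rule is optimal (i.e. it is the allocation rule of a revenue-maximizing Bayesian incentive compatible, individually rational direct mechanism) if for every $v$, $\pi(v)$ is supported on $\arg\max_{A\in\mathcal{A}}\sum_{n\in A}\overline{w}_n(v_n)$, with consistent tie-breaking: if $v_n<v_n'$ and $\overline{w}_n(v_n)=\overline{w}_n(v_n')$ then $Q_n(v_n,v_{-n})\le Q_n(v_n',v_{-n})$ for all $v_{-n}$. Let $\tilde\pi^o$ be an optimal allocation rule maximizing the realized welfare $\mathbb{E}[\sum_n Q_n(X)X_n]$ among all optimal allocation rules. $\mathrm{MSW}=\mathbb{E}[\max_{A\in\mathcal{A}}\sum_{n\in A}X_n]$, and $\mathrm{ELR}(\pi)=(\mathrm{MSW}-\mathbb{E}[\sum_nQ_n(X)X_n])/\mathrm{MSW}$. $\mathcal{D}_{r,K}$ is the set of all such type distributions with $K_n\le K$ for all $n$, $x_n^1>0$, $p_n^i>0$, and $(\max_n x_n^{K_n})/(\min_n x_n^1)\le r$. The worst case ELR is $\eta(r,K;\mathcal{A})=\sup_{\mathcal{D}_{r,K}}\mathrm{ELR}(\tilde\pi^o)$.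 *)

From HB Require Import structures.
From mathcomp Require Import all_boot all_order all_algebra.
From mathcomp Require Import boolp classical_sets reals constructive_ereal ereal.
Set Implicit Arguments.
Unset Strict Implicit.
Unset Printing Implicit Defensive.
Import Order.TTheory GRing.Theory Num.Theory.
Local Open Scope ring_scope.

Section Model.
Variables (R : realType) (N K : nat).

(* Buyer n has Kn n support points; 0-based index i < Kn n corresponds to
   the paper's x_n^{i+1}; xv n i is the value, pr n i its probability. *)
Record typedist := TypeDist {
  Kn : 'I_N -> nat;
  xv : 'I_N -> nat -> R;
  pr : 'I_N -> nat -> R }.

Definition wf_dist (D : typedist) : Prop :=
  (forall n, (0 < Kn D n)%N) /\
  (forall n, 0 < xv D n 0) /\
  (forall n (i j : nat), (i < j < Kn D n)%N -> xv D n i < xv D n j) /\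
  (forall n (i : nat), (i < Kn D n)%N -> 0 < pr D n i) /\
  (forall n, \sum_(0 <= i < Kn D n) pr D n i = 1).

(* The class D_{r,K}: K_n <= K and (max_n x_n^{K_n}) / (min_n x_n^1) <= r. *)
Definition in_DrK (r : R) (D : typedist) : Prop :=
  wf_dist D /\ (forall n, (Kn D n <= K)%N) /\
  (forall n m : 'I_N, xv D n (Kn D n).-1 <= r * xv D m 0).

Definition profile := {ffun 'I_N -> 'I_K}.

Definition valid (D : typedist) (v : profile) : bool :=
  [forall n, (v n < Kn D n)%N].

Definition prob (D : typedist) (v : profile) : R :=
  \prod_(n < N) pr D n (v n).

Definition expect (D : typedist) (f : profile -> R) : R :=
  \sum_(v : profile | valid D v) prob D v * f v.

Definition upd (v : profile) (n : 'I_N) (i : 'I_K) : profile :=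
  [ffun m => if m == n then i else v m].

(* Monotone virtual valuation via the lower convex hull. *)
Definition gpt (D : typedist) (n : 'I_N) (j : nat) : R :=
  \sum_(0 <= l < j) pr D n l.

Definition hpt (D : typedist) (n : 'I_N) (j : nat) : R :=
  if (j < Kn D n)%N then - (xv D n j * \sum_(j <= l < Kn D n) pr D n l)
  else 0.

Definition lower_hull (D : typedist) (n : 'I_N) (g : R) : R :=
  inf [set y | exists lam : 'I_(Kn D n).+1 -> R,
        (forall j, 0 <= lam j) /\ \sum_j lam j = 1 /\
        \sum_j lam j * gpt D n j = g /\
        y = \sum_j lam j * hpt D n j].

Definition hbar (D : typedist) (n : 'I_N) (j : nat) : R :=
  lower_hull D n (gpt D n j).

Definition wbar (D : typedist) (n : 'I_N) (i : nat) : R :=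
  (hbar D n i.+1 - hbar D n i) / (gpt D n i.+1 - gpt D n i).

Definition alloc_rule := profile -> {set 'I_N} -> R.

Definition is_alloc (D : typedist) (Af : {set {set 'I_N}}) (pi : alloc_rule)
  : Prop :=
  forall v, valid D v ->
    (forall A, 0 <= pi v A) /\ (forall A, A \notin Af -> pi v A = 0) /\
    \sum_(A in Af) pi v A = 1.

Definition Q (Af : {set {set 'I_N}}) (pi : alloc_rule) (n : 'I_N)
  (v : profile) : R :=
  \sum_(A in Af | n \in A) pi v A.

Definition vwelfare (D : typedist) (v : profile) (A : {set 'I_N}) : R :=
  \sum_(n in A) wbar D n (v n).

(* Optimal allocation rule (virtual welfare maximizing with consistent
   tie-breaking). *)
Definition optimal (D : typedist) (Af : {set {set 'I_N}}) (pi : alloc_rule)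
  : Prop :=
  is_alloc D Af pi /\
  (forall v, valid D v -> forall A, A \in Af -> pi v A != 0 ->
     forall B, B \in Af -> vwelfare D v B <= vwelfare D v A) /\
  (forall n (i i' : 'I_K) v, valid D (upd v n i) -> valid D (upd v n i') ->
     xv D n i < xv D n i' -> wbar D n i = wbar D n i' ->
     Q Af pi n (upd v n i) <= Q Af pi n (upd v n i')).

Definition welfare (D : typedist) (Af : {set {set 'I_N}}) (pi : alloc_rule)
  : R :=
  expect D (fun v => \sum_(n < N) Q Af pi n v * xv D n (v n)).

(* Maximum social welfare MSW (the max is over the nonempty collection Af
   of nonnegative quantities, so 0 as default is harmless when set0 \in Af). *)
Definition MSW (D : typedist) (Af : {set {set 'I_N}}) : R :=
  expect D (fun v => \big[Num.max/0]_(A in Af) \sum_(n in A) xv D n (v n)).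

Definition ELR (D : typedist) (Af : {set {set 'I_N}}) (pi : alloc_rule) : R :=
  (MSW D Af - welfare D Af pi) / MSW D Af.

Definition opt_welfare_max (D : typedist) (Af : {set {set 'I_N}})
  (pi : alloc_rule) : Prop :=
  optimal D Af pi /\
  (forall pi', optimal D Af pi' -> welfare D Af pi' <= welfare D Af pi).

End Model.

Definition eta_wc (R : realType) (N : nat) (r : R) (K : nat)
  (Af : {set {set 'I_N}}) : \bar R :=
  ereal_sup [set e : \bar R | exists (D : typedist R N)
     (pi : alloc_rule R N K),
     in_DrK K r D /\ opt_welfare_max D Af pi /\ e = (ELR D Af pi)%:E].

From HB Require Import structures.
From mathcomp Require Import all_boot all_order all_algebra.
From mathcomp Require Import boolp classical_sets reals constructive_ereal ereal.
From mathcomp Require Import lra ring.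
Import Order.TTheory GRing.Theory Num.Theory.
Local Open Scope ring_scope.
Set Implicit Arguments.
Unset Strict Implicit.

(* For a binary buyer with values x0 < x1 and probabilities p0, p1 the lower
   convex hull gives wbar(x1) = x1 and wbar(x0) = (x0 - p1 x1) / p0.  Removing
   the buyers of negative virtual value from the efficient set keeps it
   feasible (downward closure), so an optimal rule realizes at least the
   positive part of the virtual welfare of the efficient set.  Hence the
   welfare loss is at most the sum over n of E[X_n - wbar_n(X_n)^+] restricted
   to profiles where n is efficient.  Only low types contribute, and pairing
   each such profile with the one where n has the high type (n stays
   efficient there) bounds the loss of buyer n by (r - 1) / (2 r - 1) times
   its contribution to MSW, using x1 <= r x0. *)

Section LowerHull.
Variable R : realType.

Lemma inf_attained (E : set R) y0 :
  E y0 -> (forall y, E y -> y0 <= y) -> inf E = y0.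
Proof.
move=> Ey0 lb; apply/le_anti/andP; split; first by apply: ge_inf => //; exists y0.
by apply: lb_le_inf; [exists y0 |].
Qed.

Definition convex_lower_hull (K : nat) (g h : nat -> R) (t : R) : R :=
  inf [set y | exists lam : 'I_K.+1 -> R,
        (forall j, 0 <= lam j) /\ \sum_j lam j = 1 /\
        \sum_j lam j * g j = t /\
        y = \sum_j lam j * h j].

(* An affine minorant of the points (g i, h i) touching the point j is a
   supporting line there, so that point lies on the lower hull. *)
Lemma convex_lower_hull_supported K (g h : nat -> R) (j : 'I_K.+1) a b :
  (forall i : 'I_K.+1, a + b * g i <= h i) -> a + b * g j = h j ->
  convex_lower_hull K g h (g j) = h j.
Proof.
move=> below touch; apply: inf_attained.
  have pick F : \sum_(i < K.+1) (if i == j then 1 else 0) * F i = F j :> R.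
    by rewrite (bigD1 j) //= eqxx mul1r big1 ?addr0 // => i /negbTE ->; rewrite mul0r.
  exists (fun i => if i == j then 1 else 0); split; first by move=> i; case: eqP.
  rewrite !pick; split=> //.
  have := pick (fun _ => 1); under eq_bigr do rewrite mulr1; by [].
move=> _ [lam [lam_ge0 [lam_sum1 [lam_g ->]]]].
rewrite -touch -lam_g -[a]mul1r -lam_sum1 mulr_suml mulr_sumr -big_split /=.
by apply: ler_sum => i _; rewrite mulrCA -mulrDr ler_wpM2l.
Qed.

End LowerHull.

Lemma binary_loss_le (R : realFieldType) (r x0 x1 p0 p1 : R) :
  1 < r -> x1 <= r * x0 -> 0 < p0 -> 0 < p1 -> p0 + p1 = 1 ->
  x0 - Num.max ((x0 - p1 * x1) / p0) 0 <=
    (r - 1) / (2 * r - 1) * (x0 + p1 / p0 * x1).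
Proof.
move=> r_gt1 x1_le p0_gt0 p1_gt0 p01.
have scale_gt0 : 0 < p0 * (2 * r - 1) by apply: mulr_gt0; lra.
rewrite -(ler_pM2r scale_gt0).
have -> : (r - 1) / (2 * r - 1) * (x0 + p1 / p0 * x1) * (p0 * (2 * r - 1)) =
    (r - 1) * (p0 * x0 + p1 * x1).
  by field; apply/andP; split; rewrite gt_eqF //; lra.
(* In both cases the goal is a nonnegative combination of the two products
   [low_term] and [high_term]. *)
have high_term : 0 <= p1 * (r * x0 - x1) by apply: mulr_ge0; lra.
have p0E : p0 = 1 - p1 by lra.
have [w_le0 | w_gt0] := leP ((x0 - p1 * x1) / p0) 0.
  have low_term : 0 <= r * (p1 * x1 - x0).
    apply: mulr_ge0; first lra.
    by move: w_le0; rewrite pmulr_lle0 ?invr_gt0 //; lra.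
  rewrite subr0 p0E; lra.
have low_term : 0 <= (r - 1) * (x0 - p1 * x1).
  apply: mulr_ge0; first lra.
  by move: w_gt0; rewrite pmulr_lgt0 ?invr_gt0 //; lra.
have -> : (x0 - (x0 - p1 * x1) / p0) * (p0 * (2 * r - 1)) =
    (2 * r - 1) * (p0 * x0 - x0 + p1 * x1) by field; rewrite gt_eqF.
rewrite p0E; lra.
Qed.

Section VirtualValuation.
Variables (R : realType) (N : nat) (D : typedist R N).
Hypothesis wfD : wf_dist D.

Lemma gpt0 n : gpt D n 0 = 0.
Proof. by rewrite /gpt big_geq. Qed.

Lemma gpt_Kn n : gpt D n (Kn D n) = 1.
Proof. by case: wfD => _ [_ [_ [_ sum1]]]; apply: sum1. Qed.

Lemma hpt0 n : hpt D n 0 = - xv D n 0.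
Proof.
case: wfD => K_gt0 [_ [_ [_ pr_sum1]]].
by rewrite /hpt K_gt0 (pr_sum1 n) mulr1.
Qed.

Lemma hpt_Kn n : hpt D n (Kn D n) = 0.
Proof. by rewrite /hpt ltnn. Qed.

Lemma hbar_supported n j a b : (j <= Kn D n)%N ->
  (forall i, (i <= Kn D n)%N -> a + b * gpt D n i <= hpt D n i) ->
  a + b * gpt D n j = hpt D n j -> hbar D n j = hpt D n j.
Proof.
rewrite -ltnS => jK below; apply: (convex_lower_hull_supported (j := Ordinal jK)).
by case=> i /= iK; apply: below.
Qed.

Lemma wbar_single n : Kn D n = 1%N -> wbar D n 0 = xv D n 0.
Proof.
move=> K1.
have line i : (i <= Kn D n)%N -> - xv D n 0 + xv D n 0 * gpt D n i = hpt D n i.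
  rewrite {1}K1; case: i => [|[|//]] _; first by rewrite gpt0 hpt0 mulr0 addr0.
  by rewrite -K1 gpt_Kn hpt_Kn mulr1 addNr.
have hull i : (i <= Kn D n)%N -> hbar D n i = hpt D n i.
  move=> iK; apply: (hbar_supported iK _ (line i iK)) => k kK.
  by rewrite line.
rewrite /wbar !hull ?K1 // -K1 gpt_Kn hpt_Kn gpt0 hpt0.
by rewrite subr0 divr1 sub0r opprK.
Qed.

Lemma binary_type n : Kn D n = 2%N ->
  [/\ 0 < pr D n 0, 0 < pr D n 1, pr D n 0 + pr D n 1 = 1 & xv D n 0 < xv D n 1].
Proof.
case: wfD => _ [_ [x_incr [pr_gt0 pr_sum1]]] K2.
split; [apply: pr_gt0 | apply: pr_gt0 | | apply: x_incr]; rewrite ?K2 //.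
by have := pr_sum1 n; rewrite K2 big_ltn // big_nat1.
Qed.

Lemma binary_low_slope_le n : Kn D n = 2%N ->
  (xv D n 0 - pr D n 1 * xv D n 1) / pr D n 0 <= xv D n 0.
Proof.
move=> /binary_type[p0 p1 p01 x01].
rewrite ler_pdivrMr // -[pr D n 0](addrK (pr D n 1)) p01.
have : pr D n 1 * xv D n 0 < pr D n 1 * xv D n 1 by rewrite ltr_pM2l.
lra.
Qed.

Lemma wbar_binary n : Kn D n = 2%N ->
  wbar D n 0 = (xv D n 0 - pr D n 1 * xv D n 1) / pr D n 0 /\
  wbar D n 1 = xv D n 1.
Proof.
move=> K2; have [p0 p1 p01 x01] := binary_type K2.
have g1 : gpt D n 1 = pr D n 0 by rewrite /gpt big_nat1.
have h1 : hpt D n 1 = - (xv D n 1 * pr D n 1) by rewrite /hpt K2 /= big_nat1.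
have g2 : gpt D n 2 = 1 by rewrite -K2 gpt_Kn.
have h2 : hpt D n 2 = 0 by rewrite -K2 hpt_Kn.
have b_le := binary_low_slope_le K2.
set b := (xv D n 0 - pr D n 1 * xv D n 1) / pr D n 0 in b_le *.
have bp0 : b * pr D n 0 = xv D n 0 - pr D n 1 * xv D n 1 by rewrite mulfVK // gt_eqF.
have lo i : (i <= Kn D n)%N -> - xv D n 0 + b * gpt D n i <= hpt D n i.
  rewrite K2; case: i => [|[|[|//]]] _; rewrite ?gpt0 ?hpt0 ?g1 ?h1 ?g2 ?h2 ?bp0; lra.
have hi i : (i <= Kn D n)%N -> - xv D n 1 + xv D n 1 * gpt D n i <= hpt D n i.
  rewrite K2; case: i => [|[|[|//]]] _; rewrite ?gpt0 ?hpt0 ?g1 ?h1 ?g2 ?h2; try lra.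
  by rewrite -[pr D n 0](addrK (pr D n 1)) p01; lra.
have hb0 : hbar D n 0 = - xv D n 0.
  by rewrite -hpt0; apply: (hbar_supported _ lo); rewrite ?gpt0 ?hpt0 ?mulr0 ?addr0.
have hb1 : hbar D n 1 = - (xv D n 1 * pr D n 1).
  by rewrite -h1; apply: (hbar_supported _ lo); rewrite ?K2 // g1 h1 bp0; lra.
have hb2 : hbar D n 2 = 0.
  by rewrite -h2; apply: (hbar_supported _ hi); rewrite ?K2 // g2 h2 mulr1 addNr.
rewrite /wbar hb0 hb1 hb2 gpt0 g1 g2 subr0 opprK; split.
  by rewrite /b; congr (_ / _); lra.
by rewrite sub0r opprK -p01 addrAC subrr add0r mulfK // gt_eqF.
Qed.

End VirtualValuation.

Section Profiles.
Variables (R : realType) (N K : nat) (D : typedist R N).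
Hypothesis wfD : wf_dist D.
Implicit Types (v : profile N K) (f g : profile N K -> R).

Lemma xv_gt0 v n : valid D v -> 0 < xv D n (v n).
Proof.
case: wfD => _ [x0_gt0 [x_incr _]] /forallP /(_ n) vn.
have [-> | vn_gt0] := posnP (v n); first exact: x0_gt0.
by apply: lt_trans (x0_gt0 n) _; apply: x_incr; rewrite vn_gt0 vn.
Qed.

Lemma prob_gt0 v : valid D v -> 0 < prob D v.
Proof.
case: wfD => _ [_ [_ [pr_gt0 _]]] /forallP valid_v.
by apply: prodr_gt0 => n _; apply: pr_gt0.
Qed.

Lemma expect_le f g : (forall v, valid D v -> f v <= g v) ->
  expect D f <= expect D g.
Proof.
move=> le_fg; apply: ler_sum => v valid_v.
by rewrite ler_wpM2l ?le_fg // ltW ?prob_gt0.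
Qed.

Lemma expect_ext f g : (forall v, valid D v -> f v = g v) ->
  expect D f = expect D g.
Proof. by move=> eq_fg; apply: eq_bigr => v valid_v; rewrite eq_fg. Qed.

Lemma expect_gt0 f v0 : (forall v, valid D v -> 0 <= f v) ->
  valid D v0 -> 0 < f v0 -> 0 < expect D f.
Proof.
move=> f_ge0 valid_v0 f_v0_gt0; rewrite /expect (bigD1 v0) //=.
apply: ltr_pwDl; first by rewrite mulr_gt0 ?prob_gt0.
by apply: sumr_ge0 => v /andP[valid_v _]; rewrite mulr_ge0 ?f_ge0 // ltW ?prob_gt0.
Qed.

Lemma expect_sum (F : 'I_N -> profile N K -> R) :
  expect D (fun v => \sum_(n < N) F n v) = \sum_(n < N) expect D (F n).
Proof.
rewrite /expect; under eq_bigr => v _ do rewrite mulr_sumr.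
exact: exchange_big.
Qed.

Lemma expect0 : expect D (fun _ : profile N K => 0) = 0.
Proof. by rewrite /expect big1 // => v _; rewrite mulr0. Qed.

Lemma expect_ge0 f : (forall v, valid D v -> 0 <= f v) -> 0 <= expect D f.
Proof. by move=> f_ge0; rewrite -expect0; apply: expect_le. Qed.

Lemma expectB f g : expect D f - expect D g = expect D (fun v => f v - g v).
Proof. by rewrite /expect -sumrB; apply: eq_bigr => v _; rewrite mulrBr. Qed.

Lemma updE v n i m : upd v n i m = if m == n then i else v m.
Proof. by rewrite ffunE. Qed.

Lemma upd_id v n : upd v n (v n) = v.
Proof. by apply/ffunP => m; rewrite updE; case: eqP => // ->. Qed.

Lemma upd_upd v n i j : upd (upd v n i) n j = upd v n j.
Proof. by apply/ffunP => m; rewrite !updE; case: eqP. Qed.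

Lemma valid_upd v n i : Kn D n = K -> valid D (upd v n i) = valid D v.
Proof.
move=> KnK; apply/forallP/forallP => valid_v m; have := valid_v m;
  by rewrite ?updE; case: eqP => [-> _ | //]; rewrite KnK ltn_ord.
Qed.

Lemma prob_upd v n i :
  prob D (upd v n i) * pr D n (v n) = prob D v * pr D n i.
Proof.
rewrite /prob (bigD1 n) //= [in RHS](bigD1 n) //= updE eqxx.
rewrite (eq_bigr (fun m => pr D m (v m))); first ring.
by move=> m /negbTE nm; rewrite updE nm.
Qed.

End Profiles.

Section EfficientSet.
Variables (R : realType) (N K : nat) (Af : {set {set 'I_N}}) (D : typedist R N).
Hypothesis Af0 : finset.set0 \in Af.
Implicit Types (v : profile N K) (i : 'I_K) (A : {set 'I_N}).

Definition value v A : R := \sum_(n in A) xv D n (v n).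

Definition eff_set v : {set 'I_N} := [arg max_(A > finset.set0 in Af) value v A]%O.

Lemma value_ge0 v A : wf_dist D -> valid D v -> 0 <= value v A.
Proof. by move=> wfD valid_v; apply: sumr_ge0 => n _; rewrite ltW ?xv_gt0. Qed.

Lemma eff_set_in v : eff_set v \in Af.
Proof. by rewrite /eff_set; case: arg_maxP. Qed.

Lemma eff_set_max v A : A \in Af -> value v A <= value v (eff_set v).
Proof. by rewrite /eff_set; case: arg_maxP => // E _ E_max /E_max. Qed.

Lemma bigmax_value v :
  \big[Num.max/0]_(A in Af) value v A = value v (eff_set v).
Proof.
apply/le_anti/andP; split; last by rewrite (bigD1 _ (eff_set_in v)) le_max lexx.
apply: bigmax_le => [|A A_in]; last exact: eff_set_max.
by have := eff_set_max v Af0; rewrite /value big_set0.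
Qed.

Lemma value_upd v n i A : value (upd v n i) A =
  value v A + (if n \in A then xv D n i - xv D n (v n) else 0).
Proof.
rewrite /value; case: ifPn => nA; last first.
  rewrite addr0; apply: eq_bigr => m mA; rewrite updE; case: eqP => // mn.
  by move: nA; rewrite -mn mA.
rewrite (bigD1 n nA) [in RHS](bigD1 n nA) /= updE eqxx.
rewrite (eq_bigr (fun m => xv D m (v m))); first ring.
by move=> m /andP[_ /negbTE mn]; rewrite updE mn.
Qed.

Lemma eff_set_upd v n i : xv D n (v n) < xv D n i ->
  n \in eff_set v -> n \in eff_set (upd v n i).
Proof.
move=> x_lt n_in; apply/negPn/negP => n_out.
have := eff_set_max (upd v n i) (eff_set_in v).
rewrite !value_upd n_in (negbTE n_out) addr0.
have := eff_set_max v (eff_set_in (upd v n i)); lra.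
Qed.

End EfficientSet.

Section OptimalWelfare.
Variables (R : realType) (N K : nat) (Af : {set {set 'I_N}}) (D : typedist R N)
  (pi : alloc_rule R N K).
Hypothesis Af_down : forall A B : {set 'I_N}, A \in Af -> B \subset A -> B \in Af.
Hypothesis pi_opt : optimal D Af pi.
Hypothesis wbar_le_xv :
  forall (v : profile N K) n, valid D v -> wbar D n (v n) <= xv D n (v n).

Definition realized (v : profile N K) : R :=
  \sum_(n < N) Q Af pi n v * xv D n (v n).

Lemma realizedE v : realized v = \sum_(A in Af) pi v A * value D v A.
Proof.
rewrite /realized /Q.
under eq_bigr => n _ do rewrite mulr_suml big_mkcondr.
rewrite exchange_big /=; apply: eq_bigr => A _.
by rewrite /value mulr_sumr [RHS]big_mkcond; apply: eq_bigr => n _; case: ifP.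
Qed.

(* Restricting A to its buyers with nonnegative virtual value stays feasible,
   and an optimal rule only allocates sets of maximal virtual welfare. *)
Lemma virtual_surplus_le_realized v A : valid D v -> A \in Af ->
  \sum_(n in A) Num.max (wbar D n (v n)) 0 <= realized v.
Proof.
move=> valid_v A_in; have [pi_alloc [pi_max _]] := pi_opt.
have [pi_ge0 [_ pi_sum1]] := pi_alloc v valid_v.
set B := [set m in A | 0 <= wbar D m (v m)].
have B_in : B \in Af.
  by apply: (Af_down A_in); apply/fintype.subsetP => m; rewrite inE => /andP[].
have -> : \sum_(n in A) Num.max (wbar D n (v n)) 0 = vwelfare D v B.
  rewrite /vwelfare big_mkcond [RHS]big_mkcond; apply: eq_bigr => m _.
  by rewrite inE; case: (m \in A) => //=; case: leP.
rewrite realizedE -[vwelfare _ _ _]mul1r -pi_sum1 mulr_suml.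
apply: ler_sum => C C_in; have [-> | piC] := eqVneq (pi v C) 0; first by rewrite !mul0r.
rewrite ler_wpM2l //; apply: le_trans (pi_max v valid_v C C_in piC B B_in) _.
by apply: ler_sum => m _; apply: wbar_le_xv.
Qed.

End OptimalWelfare.

Section BinaryTypes.
Variables (R : realType) (N : nat) (Af : {set {set 'I_N}}) (r : R)
  (D : typedist R N) (pi : alloc_rule R N 2).
Hypothesis r_gt1 : 1 < r.
Hypothesis D_in : in_DrK 2 r D.
Hypothesis Af0 : finset.set0 \in Af.
Implicit Types (v : profile N 2).

Let wfD : wf_dist D := proj1 D_in.

Lemma Kn_1or2 n : Kn D n = 1%N \/ Kn D n = 2%N.
Proof.
have [[K_gt0 _] [K_le2 _]] := D_in; have := K_gt0 n; have := K_le2 n.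
by case: (Kn D n) => [|[|[|]]] //; auto.
Qed.

Lemma valid_single v n : Kn D n = 1%N -> valid D v -> v n = ord0.
Proof.
move=> K1 /forallP/(_ n); rewrite K1 => vn.
by apply: val_inj; case: (v n) vn => [[]].
Qed.

Lemma wbar_le_xv v n : valid D v -> wbar D n (v n) <= xv D n (v n).
Proof.
move=> valid_v; have [K1 | K2] := Kn_1or2 n.
  by rewrite (valid_single K1 valid_v) (wbar_single wfD K1).
have [w0 w1] := wbar_binary wfD K2.
by case: (v n) => [[|[|//]] ?]; rewrite /= ?w0 ?w1 ?binary_low_slope_le.
Qed.

Lemma expect_binary n (f : profile N 2 -> R) : Kn D n = 2%N ->
  expect D f = \sum_(v | valid D v && (v n == ord0))
    prob D v * (f v + pr D n 1 / pr D n 0 * f (upd v n ord_max)).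
Proof.
move=> K2; have [p0 _ _ _] := binary_type wfD K2.
rewrite /expect (bigID (fun v => v n == ord0)) /=.
rewrite [X in _ + X](reindex_onto (fun v => upd v n ord_max)
                                  (fun v => upd v n ord0)) /=; last first.
  move=> v /andP[_ vn]; rewrite upd_upd.
  have -> : ord_max = v n by case: (v n) vn => [[|[|//]] ?] //= _; apply: val_inj.
  exact: upd_id.
rewrite [X in _ + X](eq_bigl (fun v => valid D v && (v n == ord0))) => [|v];
  last first.
  rewrite valid_upd // updE eqxx upd_upd andbT; congr (_ && _).
  by apply/eqP/eqP => [<- | vn0]; rewrite ?updE ?eqxx // -vn0 upd_id.
rewrite -big_split /=; apply: eq_bigr => v /andP[_ /eqP vn0].
have := prob_upd D v n ord_max; rewrite vn0 => prob_max.
by rewrite mulrDr !mulrA -prob_max mulfK ?gt_eqF.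
Qed.

Definition msw_part n : R := expect D (fun v : profile N 2 =>
  if n \in eff_set Af D v then xv D n (v n) else 0).

Definition loss_part n : R := expect D (fun v : profile N 2 =>
  if n \in eff_set Af D v then xv D n (v n) - Num.max (wbar D n (v n)) 0 else 0).

Lemma loss_part_le n : loss_part n <= (r - 1) / (2 * r - 1) * msw_part n.
Proof.
(* [lra] ignores section hypotheses, hence the [move: r_gt1]. *)
have c_ge0 : 0 <= (r - 1) / (2 * r - 1) by apply: divr_ge0; move: r_gt1; lra.
have msw_ge0 : 0 <= msw_part n.
  by apply: expect_ge0 => // v valid_v; case: ifP => _ //; rewrite ltW ?xv_gt0.
have [K1 | K2] := Kn_1or2 n.
  rewrite /loss_part (expect_ext (g := fun=> 0)) ?expect0 => [|v valid_v].
    exact: mulr_ge0.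
  rewrite (valid_single K1 valid_v) (wbar_single wfD K1) max_l ?subrr ?if_same //.
  by case: wfD => _ [x0_gt0 _]; apply/ltW.
(* Pair each profile where n is low with its twin where n is high: the twin
   carries no loss and keeps n efficient. *)
have [p0 p1 p01 x01] := binary_type wfD K2.
have x1_le : xv D n 1 <= r * xv D n 0 by case: D_in => _ [_ /(_ n n)]; rewrite K2.
have [w0 w1] := wbar_binary wfD K2.
have x1_gt0 : 0 < xv D n 1 by case: wfD => _ [x0_gt0 _]; apply: lt_trans x01.
have high_max : Num.max (xv D n 1) 0 = xv D n 1 by rewrite max_l // ltW.
rewrite /loss_part /msw_part !(expect_binary _ K2) mulr_sumr.
apply: ler_sum => v /andP[valid_v /eqP vn0].
rewrite updE eqxx vn0 /= w1 high_max subrr if_same mulr0 addr0.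
rewrite [X in _ <= X]mulrCA ler_pM2l ?prob_gt0 //.
case: ifPn => [n_in | _].
  by rewrite (eff_set_upd Af0 _ n_in) ?vn0 // w0; apply: binary_loss_le.
rewrite add0r; case: ifP => _; last by rewrite !mulr0.
by rewrite mulr_ge0 // mulr_ge0 ?divr_ge0 ?ltW.
Qed.

Hypothesis N_gt0 : (0 < N)%N.
Hypothesis Af_cover : forall n : 'I_N, exists2 A, A \in Af & n \in A.
Hypothesis Af_down : forall A B : {set 'I_N}, A \in Af -> B \subset A -> B \in Af.
Hypothesis pi_opt : optimal D Af pi.

Lemma MSW_sum : MSW 2 D Af = \sum_(n < N) msw_part n.
Proof.
rewrite /MSW -expect_sum; apply: expect_ext => v _.
by rewrite bigmax_value // /value big_mkcond.
Qed.

Lemma MSW_gt0 : 0 < MSW 2 D Af.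
Proof.
pose v0 : profile N 2 := [ffun _ => ord0].
have valid_v0 : valid D v0.
  by apply/forallP => m; rewrite ffunE; case: wfD => K_gt0 _; apply: K_gt0.
have [A A_in n0_in] := Af_cover (Ordinal N_gt0).
rewrite /MSW; apply: (expect_gt0 wfD (v0 := v0)) => // [v valid_v|].
  by rewrite bigmax_value // value_ge0.
rewrite bigmax_value //; apply: lt_le_trans (eff_set_max D Af0 v0 A_in).
rewrite /value (bigD1 _ n0_in) /= ltr_pwDl ?xv_gt0 //.
by apply: sumr_ge0 => m _; rewrite ltW ?xv_gt0.
Qed.

Lemma ELR_le : ELR D Af pi <= (r - 1) / (2 * r - 1).
Proof.
rewrite /ELR ler_pdivrMr ?MSW_gt0 //.
have loss_le : MSW 2 D Af - welfare D Af pi <= \sum_(n < N) loss_part n.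
  rewrite /MSW /welfare expectB -expect_sum; apply: expect_le => // v valid_v.
  rewrite bigmax_value // -big_mkcond /= sumrB /value lerD2l lerN2.
  apply: (virtual_surplus_le_realized Af_down pi_opt wbar_le_xv valid_v).
  exact: eff_set_in.
apply: le_trans loss_le _; rewrite MSW_sum mulr_sumr.
by apply: ler_sum => n _; apply: loss_part_le.
Qed.

End BinaryTypes.

Unset Implicit Arguments.
Set Strict Implicit.

Theorem proposition3 (R : realType) (N : nat) (Af : {set {set 'I_N}})
  (r : R) :
  (0 < N)%N ->
  (finset.set0 : {set 'I_N}) \in Af ->
  (forall A B : {set 'I_N}, A \in Af -> B \subset A -> B \in Af) ->
  (forall n : 'I_N, exists2 A, A \in Af & n \in A) ->
  1 < r ->
  (eta_wc r 2%N Af <= (((r - 1) / (2 * r - 1))%R)%:E)%E /\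
  (r - 1) / (2 * r - 1) <= 1 / 2.
Proof.
move=> N_gt0 Af0 Af_down Af_cover r_gt1; split.
  apply: ge_ereal_sup => _ [D [pi [D_in [[pi_opt _] ->]]]].
  by rewrite lee_fin (ELR_le r_gt1 D_in Af0 N_gt0 Af_cover Af_down pi_opt).
by rewrite ler_pdivrMr; lra.
Qed.
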